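(* Let $Y\subset\mathbb{R}^n$ be open and let $\omega\colon Y\to\mathbb{R}^n$, $F\colon Y\to\mathbb{R}$ and $D^\pm\colon Y\times Y\to\mathbb{R}^n$ be arbitrary functions with $D^\pm(u,u)=0$ for all $u\in Y$. Then the following are equivalent: (A) there exists $F^{\mathrm{num}}\colon Y\times Y\to\mathbb{R}$ with $F^{\mathrm{num}}(u,u)=F(u)$ such that for all $u_-,u_0,u_+\in Y$, $$\omega(u_0)\cdot\big(D^+(u_-,u_0)+D^-(u_0,u_+)\big)\ \ge\ F^{\mathrm{num}}(u_0,u_+)-F^{\mathrm{num}}(u_-,u_0);$$ (B) for all $u_-,u_+\in Y$, $$\omega(u_+)\cdot D^+(u_-,u_+)+\omega(u_-)\cdot D^-(u_-,u_+)\ \ge\ F(u_+)-F(u_-).$$ Moreover, there exists a consistent $F^{\mathrm{num}}$ for which (A) holds with equality for all triples if and only if (B) holds with equality for all pairs, and then $F^{\mathrm{num}}$ is uniquely given by $$F^{\mathrm{num}}(u_-,u_+)=\tfrac12\big(F(u_+)+F(u_-)\big)+\tfrac12\,\omega(u_-)\cdot D^-(u_-,u_+)-\tfrac12\,\omega(u_+)\cdot D^+(u_-,u_+).$$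
   Context: No relation between $\omega$, $F$ and $D^\pm$ (and no convexity) is assumed; the statement is purely algebraic. *)

(* R : realType, R^n = 'rV[R]_n with its normed topology. *)
From HB Require Import structures.
From mathcomp Require Import all_boot all_order all_algebra.
From mathcomp Require Import all_classical all_reals all_analysis.
Set Implicit Arguments. Unset Strict Implicit. Unset Printing Implicit Defensive.
Import Order.TTheory GRing.Theory Num.Theory.
Import numFieldNormedType.Exports.
Local Open Scope ring_scope.

Definition dotv (R : realType) (n : nat) (u v : 'rV[R]_n) : R :=
  \sum_(i < n) u 0 i * v 0 i.

From HB Require Import structures.
From mathcomp Require Import all_boot all_order all_algebra.
From mathcomp Require Import all_classical all_reals all_analysis.
From mathcomp Require Import ring.
Set Implicit Arguments. Unset Strict Implicit. Unset Printing Implicit Defensive.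
Import Order.TTheory GRing.Theory Num.Theory.
Import numFieldNormedType.Exports.
Local Open Scope classical_set_scope.
Local Open Scope ring_scope.

(* With [fp u v = omega v . D+(u,v)] and [fm u v = omega u . D-(u,v)], the
   defect of (B) at (u-, u+) is, for any consistent flux G, the sum of the
   defects of (A) at the degenerate triples (u-, u+, u+) and (u-, u-, u+).
   Conversely, for the averaged flux the defect of (A) at (u-, u0, u+) is the
   mean of the defects of (B) at (u-, u0) and (u0, u+).  The triple
   (u-, u+, u+) also expresses G(u-, u+) through its own defect, which gives
   uniqueness of an exact consistent flux. *)

Lemma dotvD (R : realType) (n : nat) (w a b : 'rV[R]_n) :
  dotv w (a + b) = dotv w a + dotv w b.
Proof. by rewrite /dotv -big_split; apply: eq_bigr => i _; rewrite mxE mulrDr. Qed.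

Lemma dotv0 (R : realType) (n : nat) (w : 'rV[R]_n) : dotv w 0 = 0.
Proof. by rewrite /dotv big1 // => i _; rewrite mxE mulr0. Qed.

Section NumericalFlux.

Variables (R : numFieldType) (T : Type) (Y : set T) (F : T -> R).
Variables (fp fm : T -> T -> R).
Hypothesis fp_diag : forall u, Y u -> fp u u = 0.
Hypothesis fm_diag : forall u, Y u -> fm u u = 0.

Definition consistent_flux (G : T -> T -> R) := forall u, Y u -> G u u = F u.

Definition cell_defect (G : T -> T -> R) um u0 up :=
  fp um u0 + fm u0 up - (G u0 up - G um u0).

Definition pair_defect um up := fp um up + fm um up - (F up - F um).

Definition avg_num_flux um up :=
  2^-1 * (F up + F um) + 2^-1 * fm um up - 2^-1 * fp um up.

Lemma avg_num_flux_consistent : consistent_flux avg_num_flux.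
Proof.
by move=> u Yu; rewrite /avg_num_flux fp_diag // fm_diag // [RHS]splitr; field.
Qed.

Lemma cell_defect_avg_num_flux um u0 up :
  cell_defect avg_num_flux um u0 up = 2^-1 * (pair_defect um u0 + pair_defect u0 up).
Proof.
rewrite /cell_defect /pair_defect /avg_num_flux.
by rewrite [fp um u0]splitr [fm u0 up]splitr; field.
Qed.

Section Consistent.

Variables (G : T -> T -> R).
Hypothesis G_consistent : consistent_flux G.

Lemma pair_defect_cell_sum um up : Y um -> Y up ->
  pair_defect um up = cell_defect G um up up + cell_defect G um um up.
Proof.
move=> Yum Yup; rewrite /cell_defect /pair_defect.
by rewrite fp_diag // fm_diag // !G_consistent //; ring.
Qed.

Lemma consistent_fluxE um up : Y um -> Y up ->
  G um up = F up - fp um up + cell_defect G um up up.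
Proof.
by move=> Yum Yup; rewrite /cell_defect fm_diag // G_consistent //; ring.
Qed.

End Consistent.

Lemma pair_defect_ge0 G : consistent_flux G ->
  (forall um u0 up, Y um -> Y u0 -> Y up -> 0 <= cell_defect G um u0 up) ->
  forall um up, Y um -> Y up -> 0 <= pair_defect um up.
Proof.
by move=> G_cons cell_ge0 um up Yum Yup; rewrite (pair_defect_cell_sum G_cons) //
  addr_ge0 // cell_ge0.
Qed.

Lemma pair_defect_eq0 G : consistent_flux G ->
  (forall um u0 up, Y um -> Y u0 -> Y up -> cell_defect G um u0 up = 0) ->
  forall um up, Y um -> Y up -> pair_defect um up = 0.
Proof.
by move=> G_cons cell_eq0 um up Yum Yup; rewrite (pair_defect_cell_sum G_cons) //
  !cell_eq0 ?addr0.
Qed.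

Lemma cell_defect_avg_ge0 :
  (forall um up, Y um -> Y up -> 0 <= pair_defect um up) ->
  forall um u0 up, Y um -> Y u0 -> Y up -> 0 <= cell_defect avg_num_flux um u0 up.
Proof.
move=> pair_ge0 um u0 up Yum Y0 Yup; rewrite cell_defect_avg_num_flux.
by rewrite mulr_ge0 ?invr_ge0 ?ler0n // addr_ge0 ?pair_ge0.
Qed.

Lemma cell_defect_avg_eq0 :
  (forall um up, Y um -> Y up -> pair_defect um up = 0) ->
  forall um u0 up, Y um -> Y u0 -> Y up -> cell_defect avg_num_flux um u0 up = 0.
Proof.
move=> pair_eq0 um u0 up Yum Y0 Yup.
by rewrite cell_defect_avg_num_flux !pair_eq0 // addr0 mulr0.
Qed.

Lemma exact_flux_unique G : consistent_flux G ->
  (forall um u0 up, Y um -> Y u0 -> Y up -> cell_defect G um u0 up = 0) ->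
  forall um up, Y um -> Y up -> G um up = avg_num_flux um up.
Proof.
move=> G_cons G_exact um up Yum Yup.
have avg_exact := cell_defect_avg_eq0 (pair_defect_eq0 G_cons G_exact).
rewrite (consistent_fluxE G_cons) // (consistent_fluxE avg_num_flux_consistent) //.
by rewrite G_exact // avg_exact.
Qed.

End NumericalFlux.

Theorem mainTheorem3 (R : realType) (n : nat) (Y : set 'rV[R]_n) (hY : open Y)
  (omega : 'rV[R]_n -> 'rV[R]_n) (F : 'rV[R]_n -> R)
  (Dp Dm : 'rV[R]_n -> 'rV[R]_n -> 'rV[R]_n)
  (hDp : forall u, Y u -> Dp u u = 0) (hDm : forall u, Y u -> Dm u u = 0) :
  ((exists Fnum : 'rV[R]_n -> 'rV[R]_n -> R,
      (forall u, Y u -> Fnum u u = F u) /\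
      (forall um u0 up, Y um -> Y u0 -> Y up ->
         dotv (omega u0) (Dp um u0 + Dm u0 up) >= Fnum u0 up - Fnum um u0))
   <->
   (forall um up, Y um -> Y up ->
      dotv (omega up) (Dp um up) + dotv (omega um) (Dm um up) >= F up - F um))
  /\
  ((exists Fnum : 'rV[R]_n -> 'rV[R]_n -> R,
      (forall u, Y u -> Fnum u u = F u) /\
      (forall um u0 up, Y um -> Y u0 -> Y up ->
         dotv (omega u0) (Dp um u0 + Dm u0 up) = Fnum u0 up - Fnum um u0))
   <->
   (forall um up, Y um -> Y up ->
      dotv (omega up) (Dp um up) + dotv (omega um) (Dm um up) = F up - F um))
  /\
  ((forall um up, Y um -> Y up ->
      dotv (omega up) (Dp um up) + dotv (omega um) (Dm um up) = F up - F um) ->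
   forall Fnum : 'rV[R]_n -> 'rV[R]_n -> R,
      (forall u, Y u -> Fnum u u = F u) ->
      (forall um u0 up, Y um -> Y u0 -> Y up ->
         dotv (omega u0) (Dp um u0 + Dm u0 up) = Fnum u0 up - Fnum um u0) ->
      forall um up, Y um -> Y up ->
        Fnum um up = 2^-1 * (F up + F um) + 2^-1 * dotv (omega um) (Dm um up)
                     - 2^-1 * dotv (omega up) (Dp um up)).
Proof.
pose fp u v := dotv (omega v) (Dp u v).
pose fm u v := dotv (omega u) (Dm u v).
have fp_diag u : Y u -> fp u u = 0 by move=> Yu; rewrite /fp hDp // dotv0.
have fm_diag u : Y u -> fm u u = 0 by move=> Yu; rewrite /fm hDm // dotv0.
have cellE G um u0 up : dotv (omega u0) (Dp um u0 + Dm u0 up) - (G u0 up - G um u0)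
    = cell_defect fp fm G um u0 up by rewrite dotvD.
have avg_cons := avg_num_flux_consistent F fp_diag fm_diag.
split; [split | split; [split |]].
- move=> [G [G_cons G_cell]] um up Yum Yup; rewrite -subr_ge0.
  apply: (pair_defect_ge0 fp_diag fm_diag G_cons) => // ? ? ? ? ? ?.
  by rewrite -cellE subr_ge0 G_cell.
- move=> pair_ge0; exists (avg_num_flux F fp fm); split => // um u0 up Yum Y0 Yup.
  rewrite -subr_ge0 cellE; apply: (cell_defect_avg_ge0 _ Yum Y0 Yup) => v w Yv Yw.
  by rewrite subr_ge0; apply: pair_ge0.
- move=> [G [G_cons G_cell]] um up Yum Yup; apply/eqP; rewrite -subr_eq0; apply/eqP.
  apply: (pair_defect_eq0 fp_diag fm_diag G_cons) => // ? ? ? ? ? ?.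
  by rewrite -cellE G_cell // subrr.
- move=> pair_eq; exists (avg_num_flux F fp fm); split => // um u0 up Yum Y0 Yup.
  apply/eqP; rewrite -subr_eq0 cellE; apply/eqP.
  apply: (cell_defect_avg_eq0 _ Yum Y0 Yup) => v w Yv Yw.
  by apply/eqP; rewrite subr_eq0; apply/eqP; apply: pair_eq.
- move=> pair_eq G G_cons G_cell um up Yum Yup.
  apply: (exact_flux_unique fp_diag fm_diag G_cons) => // ? ? ? ? ? ?.
  by rewrite -cellE G_cell // subrr.
Qed.
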